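(* Let $G$ be a graph with a vertex $r$ that belongs to at least one but not all minimum vertex covers of $G$ and satisfies $N[r]\subsetneq V(G)$. Let $Y$ be a minimal blocking set of $G$ with $r\notin Y$. Then: (i) $Y$ is a blocking set of $G-r$ and $Y\setminus N[r]$ is a blocking set of $G-N[r]$; (ii) for every minimal blocking set $Y'$ of $G-r$ and every minimal blocking set $\widetilde Y$ of $G-N[r]$, the set $Y'\cup\widetilde Y$ is a blocking set of $G$; (iii) for every $y\in Y$, either $Y\setminus\{y\}$ is not a blocking set of $G-r$, or $Y\setminus(\{y\}\cup N[r])$ is not a blocking set of $G-N[r]$.
   Context: $\mathrm{OPT}(G)$ is the minimum vertex cover size; minimum vertex covers have size $\mathrm{OPT}(G)$. $Y\subseteq V(G)$ is a blocking set if no minimum vertex cover contains $Y$; minimal if no proper subset is. $N(r)$ is the open and $N[r]=N(r)\cup\{r\}$ the closed neighborhood of $r$. *)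

(* A finite simple graph G is a finType T of vertices with a
   symmetric irreflexive edge relation e : rel T.  Induced subgraphs G[S]
   (e.g. G - r, G - N[r]) are given by their vertex set S : {set T}. *)
From HB Require Import structures.
From mathcomp Require Import all_boot.
Set Implicit Arguments. Unset Strict Implicit. Unset Printing Implicit Defensive.

Definition is_vc (T : finType) (e : rel T) (S C : {set T}) : bool :=
  (C \subset S) &&
  [forall x in S, forall y in S, e x y ==> (x \in C) || (y \in C)].

Definition OPT (T : finType) (e : rel T) (S : {set T}) : nat :=
  \big[minn/#|S|]_(C : {set T} | is_vc e S C) #|C|.
(* (S itself is always a vertex cover of G[S], so #|S| is a harmless default) *)

Definition is_mvc (T : finType) (e : rel T) (S C : {set T}) : bool :=
  is_vc e S C && (#|C| == OPT e S).

Definition blocking (T : finType) (e : rel T) (S Y : {set T}) : bool :=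
  (Y \subset S) && ~~ [exists C : {set T}, is_mvc e S C && (Y \subset C)].

Definition min_blocking (T : finType) (e : rel T) (S Y : {set T}) : bool :=
  blocking e S Y && [forall Z : {set T}, (Z \proper Y) ==> ~~ blocking e S Z].

Definition nbh (T : finType) (e : rel T) (r : T) : {set T} := [set x | e r x].
Definition cnbh (T : finType) (e : rel T) (r : T) : {set T} := r |: nbh e r.

(* Call Z "coverable" in G[S] when some minimum vertex cover of G[S] contains
   Z; a blocking set is then a non-coverable subset of the vertex set.  The
   proof rests on two counting identities, valid when r lies in some minimum
   vertex cover, resp. outside some minimum vertex cover of G:
       OPT(G) = OPT(G - r) + 1,      OPT(G) = |N(r)| + OPT(G - N[r]).
   They turn minimum vertex covers of G into minimum vertex covers of the two
   subgraphs and back: C |-> C \ r or C \ N(r) (according as r is in C or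
   not), and D |-> {r} u D, resp. N(r) u D.  Consequently
   - every set coverable in G is, after removing r resp. N[r], coverable in
     G - r or in G - N[r] (the dichotomy [coverable_split]);
   - sets coverable in G - r, resp. G - N[r], stay coverable in G once r,
     resp. N(r), is added ([coverable_lift_del], [coverable_lift_nbh]).
   Part (i) of the theorem follows from the two lifting lemmas, parts (ii)
   and (iii) from the dichotomy (applied to Y' u Y~ and to Y \ {y}). *)
From HB Require Import structures.
From mathcomp Require Import all_boot.
From mathcomp Require Import zify.
Set Implicit Arguments. Unset Strict Implicit. Unset Printing Implicit Defensive.

Section VertexCovers.
Variables (T : finType) (e : rel T).

Lemma vcP S C : is_vc e S C <-> C \subset S /\
   forall x y, x \in S -> y \in S -> e x y -> (x \in C) || (y \in C).
Proof.
split.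
- case/andP=> CS /forallP cover; split=> // x y xS yS exy.
  by move: (cover x); rewrite xS /= => /forallP/(_ y); rewrite yS /= exy.
- case=> CS cover; apply/andP; split=> //; apply/forallP=> x; apply/implyP=> xS.
  by apply/forallP=> y; apply/implyP=> yS; apply/implyP; apply: cover.
Qed.

Lemma opt_le S C : is_vc e S C -> OPT e S <= #|C|.
Proof.
move=> vcC; rewrite /OPT.
have : C \in index_enum {set T} by rewrite /index_enum -enumT mem_enum.
elim: (index_enum _) => [//|D s IH]; rewrite inE big_cons.
case/orP=> [/eqP <-|Cs]; first by rewrite vcC geq_minl.
case: (is_vc e S D); last exact: IH.
by rewrite geq_min IH ?orbT.
Qed.

Lemma opt_attained S : exists C, is_vc e S C /\ #|C| = OPT e S.
Proof.
rewrite /OPT; apply: (big_ind (fun n => exists C, is_vc e S C /\ #|C| = n)).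
- exists S; split=> //; apply/vcP; split=> // x y xS _ _; by rewrite xS.
- move=> m n [C [vcC <-]] [D [vcD <-]].
  by case: (leqP #|C| #|D|) => _; [exists C | exists D].
- by move=> C vcC; exists C.
Qed.

Lemma mvc_of_le S C : is_vc e S C -> #|C| <= OPT e S -> is_mvc e S C.
Proof. by move=> vcC le_C; rewrite /is_mvc vcC eqn_leq le_C opt_le. Qed.

Definition coverable (S Z : {set T}) : bool :=
  [exists C, is_mvc e S C && (Z \subset C)].

Lemma blockingE S Z : blocking e S Z = (Z \subset S) && ~~ coverable S Z.
Proof. by []. Qed.

Lemma coverableS (S Z Z' : {set T}) : Z' \subset Z -> coverable S Z -> coverable S Z'.
Proof.
move=> Z'Z /existsP[C /andP[mvcC ZC]]; apply/existsP; exists C.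
by rewrite mvcC (subset_trans Z'Z ZC).
Qed.

End VertexCovers.

Section SplitAtVertex.
Variables (T : finType) (e : rel T) (r : T).

Local Notation V := [set: T].
Local Notation N := (nbh e r).
Local Notation B := (~: cnbh e r).

Lemma in_nbh x : (x \in N) = e r x.
Proof. by rewrite inE. Qed.

Lemma in_outside x : (x \in B) = (x != r) && ~~ e r x.
Proof. by rewrite !inE negb_or. Qed.

Lemma vc_del C : is_vc e V C -> is_vc e (V :\ r) (C :\ r).
Proof.
case/vcP=> _ cover; apply/vcP; split; first exact: setSD.
move=> x y; rewrite !inE => /andP[xr _] /andP[yr _] exy.
by rewrite xr yr; apply: cover.
Qed.

Lemma vc_add D : is_vc e (V :\ r) D -> is_vc e V (r |: D).
Proof.
case/vcP=> _ cover; apply/vcP; split=> // x y _ _ exy; rewrite !in_setU1.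
case: (eqVneq x r) => //= xr; case: (eqVneq y r) => [_|yr]; first by rewrite orbT.
by apply: cover; rewrite // !inE ?xr ?yr.
Qed.

Lemma vc_nbh_sub C : is_vc e V C -> r \notin C -> N \subset C.
Proof.
case/vcP=> _ cover rC; apply/subsetP=> x; rewrite in_nbh => erx.
by move: (cover r x (in_setT r) (in_setT x) erx); rewrite (negbTE rC).
Qed.

Lemma vc_del_nbh C : is_vc e V C -> r \notin C -> is_vc e B (C :\: N).
Proof.
move=> vcC rC; case/vcP: (vcC) => _ cover; apply/vcP; split.
  apply/subsetP=> x; rewrite in_setD in_outside in_nbh => /andP[-> xC].
  by rewrite andbT; apply: contraNneq rC => <-.
move=> x y; rewrite !in_outside !in_setD !in_nbh => /andP[_ ->] /andP[_ ->] exy.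
exact: cover.
Qed.

Lemma vc_add_nbh (e_sym : symmetric e) D : is_vc e B D -> is_vc e V (N :|: D).
Proof.
case/vcP=> _ cover; apply/vcP; split=> // x y _ _ exy; rewrite !in_setU !in_nbh.
case: (eqVneq x r) => [xr|xr]; first by subst x; rewrite exy orbT.
case: (eqVneq y r) => [yr|yr]; first by subst y; rewrite e_sym exy.
case: (boolP (e r x)) => //= rx; case: (boolP (e r y)) => //= ry; first by rewrite orbT.
by apply: cover; rewrite // in_outside ?xr ?yr ?rx ?ry.
Qed.

Section VertexInCover.
Hypothesis r_in : exists C, is_mvc e V C /\ r \in C.

Lemma opt_del : OPT e V = (OPT e (V :\ r)).+1.
Proof.
have [C [/andP[vcC /eqP optC] rC]] := r_in.
have [D [vcD optD]] := opt_attained e (V :\ r).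
have := opt_le (vc_del vcC); have := opt_le (vc_add vcD).
have := cardsD1 r C; have := cardsU1 r D; rewrite rC; lia.
Qed.

Lemma mvc_del C : is_mvc e V C -> r \in C -> is_mvc e (V :\ r) (C :\ r).
Proof.
case/andP=> vcC /eqP optC rC; apply: mvc_of_le (vc_del vcC) _.
have := opt_del; have := cardsD1 r C; rewrite rC; lia.
Qed.

Lemma mvc_add D : is_mvc e (V :\ r) D -> is_mvc e V (r |: D).
Proof.
case/andP=> vcD /eqP optD; apply: mvc_of_le (vc_add vcD) _.
have := opt_del; have := cardsU1 r D; case: (r \notin D) => /=; lia.
Qed.

Lemma coverable_lift_del Z : coverable e (V :\ r) Z -> coverable e V (r |: Z).
Proof.
case/existsP=> D /andP[mvcD ZD]; apply/existsP; exists (r |: D).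
by rewrite mvc_add // setUS.
Qed.

End VertexInCover.

Section VertexOutsideCover.
Hypothesis e_sym : symmetric e.
Hypothesis r_out : exists C, is_mvc e V C /\ r \notin C.

Lemma opt_nbh : OPT e V = #|N| + OPT e B.
Proof.
have [C [/andP[vcC /eqP optC] rC]] := r_out.
have [D [vcD optD]] := opt_attained e B.
have := opt_le (vc_del_nbh vcC rC); have := opt_le (vc_add_nbh e_sym vcD).
have := cardsD C N; rewrite (setIidPr (vc_nbh_sub vcC rC)).
have := cardsU N D; have := subset_leq_card (vc_nbh_sub vcC rC); lia.
Qed.

Lemma mvc_del_nbh C : is_mvc e V C -> r \notin C -> is_mvc e B (C :\: N).
Proof.
case/andP=> vcC /eqP optC rC; apply: mvc_of_le (vc_del_nbh vcC rC) _.
have := opt_nbh; have := cardsD C N; rewrite (setIidPr (vc_nbh_sub vcC rC)).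
have := subset_leq_card (vc_nbh_sub vcC rC); lia.
Qed.

Lemma mvc_add_nbh D : is_mvc e B D -> is_mvc e V (N :|: D).
Proof.
case/andP=> vcD /eqP optD; apply: mvc_of_le (vc_add_nbh e_sym vcD) _.
have := opt_nbh; have := cardsU N D; lia.
Qed.

Lemma coverable_lift_nbh Z : coverable e B Z -> coverable e V (N :|: Z).
Proof.
case/existsP=> D /andP[mvcD ZD]; apply/existsP; exists (N :|: D).
by rewrite mvc_add_nbh // setUS.
Qed.

End VertexOutsideCover.

(* No assumption on r is needed here: the
   hypotheses of [opt_del], [opt_nbh] are witnessed by the cover itself. *)
Lemma coverable_split (e_sym : symmetric e) Z :
  coverable e V Z ->
  coverable e (V :\ r) (Z :\ r) || coverable e B (Z :\: cnbh e r).
Proof.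
case/existsP=> C /andP[mvcC ZC]; apply/orP; case: (boolP (r \in C)) => rC.
- left; apply/existsP; exists (C :\ r).
  by rewrite (mvc_del _ mvcC rC) ?setSD //; exists C.
- right; apply/existsP; exists (C :\: N).
  rewrite (mvc_del_nbh e_sym _ mvcC rC); last by exists C.
  by apply: subset_trans (setSD _ ZC) (setDS _ _); rewrite /cnbh subsetUr.
Qed.

End SplitAtVertex.

Theorem mainTheorem13 (T : finType) (e : rel T)
  (e_sym : symmetric e) (e_irr : irreflexive e) (r : T)
  (r_in : exists C : {set T}, is_mvc e [set: T] C /\ r \in C)
  (r_out : exists C : {set T}, is_mvc e [set: T] C /\ r \notin C)
  (hN : cnbh e r \proper [set: T])
  (Y : {set T}) (hY : min_blocking e [set: T] Y) (hrY : r \notin Y) :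
  (blocking e ([set: T] :\ r) Y /\
   blocking e (~: cnbh e r) (Y :\: cnbh e r)) /\
  (forall Y' Yt : {set T},
     min_blocking e ([set: T] :\ r) Y' ->
     min_blocking e (~: cnbh e r) Yt ->
     blocking e [set: T] (Y' :|: Yt)) /\
  (forall y, y \in Y ->
     ~~ blocking e ([set: T] :\ r) (Y :\ y) \/
     ~~ blocking e (~: cnbh e r) (Y :\: (y |: cnbh e r))).
Proof.
case/andP: hY => /andP[_ Y_uncov] Y_min.
have Y_sub : Y \subset [set: T] :\ r by rewrite subsetD1 subsetT hrY.
split; [split|split].
(* (i): a cover of G - r (resp. G - N[r]) extending Y (resp. Y \ N[r]) lifts
   to a minimum vertex cover of G containing Y, since r is not in Y. *)
- rewrite blockingE Y_sub; apply: contra Y_uncov => /(coverable_lift_del r_in).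
  exact/coverableS/subsetUr.
- rewrite blockingE setDE subsetIr; apply: contra Y_uncov.
  move/(coverable_lift_nbh e_sym r_out); apply: coverableS; apply/subsetP=> x xY.
  have xr : x != r by apply: contraNneq hrY => <-.
  by rewrite !inE xY (negbTE xr) /= orbN.
(* (ii): only the blocking property of Y' and Y~ is used; by the dichotomy
   a cover of G containing Y' u Y~ would yield one of G - r containing Y'
   or one of G - N[r] containing Y~. *)
- move=> Y' Yt /andP[/andP[Y'_sub Y'_uncov] _] /andP[/andP[Yt_sub Yt_uncov] _].
  rewrite blockingE subsetT /=.
  apply/negP=> /(coverable_split r e_sym)/orP[cov|cov].
  + move/negP: Y'_uncov; apply; apply: coverableS cov.
    by move: Y'_sub; rewrite !subsetD1 subsetUl => /andP[_ ->].
  + move/negP: Yt_uncov; apply; apply: coverableS cov.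
    by move: Yt_sub; rewrite subsetD subsetUr subsets_disjoint setCK.
(* (iii): by minimality Y \ {y} is coverable in G; apply the dichotomy. *)
- move=> y yY; have := forallP Y_min (Y :\ y).
  rewrite properD1 // blockingE subsetT /= negbK => cov.
  case/orP: (coverable_split r e_sym cov) => [covr|covN]; [left|right];
    rewrite blockingE negb_and negbK.
  + rewrite (coverableS _ covr) ?orbT // subsetD1 subxx.
    by rewrite in_setD1 (negbTE hrY) andbF.
  + by rewrite -setDDl covN orbT.
Qed.
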